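(* Let $\theta=9/10$, $k=6$ and $d\ge1$. Let $x\in\{0,1\}^{L_d}$ be such that there are at least $4$ children $i$ of the root with $$\mathbb{P}\big[X^{(1)}_i=1\ \big|\ X^{(d)}(L_{d-1}(i))=x(L_{d-1}(i))\big]\ge 0.95.$$ Then $\mathbb{P}[X^{(0)}=1\mid X^{(d)}=x]\ge 19/20$.
   Context: Broadcast (Ising) tree model: complete $k$-ary tree of depth $d$ with root $\rho$; $L_r$ = vertices at depth $r$; for a vertex $i$, $L_s(i)$ = its descendants $s$ levels below it, and $x(A)$ denotes the restriction of $x$ to the index set $A$. $\sigma_\rho$ uniform on $\{0,1\}$; each child $v$ of $u$ independently has $\sigma_v=\sigma_u$ with probability $(1+\theta)/2$ and $1-\sigma_u$ otherwise; $X^{(r)}=(\sigma_v)_{v\in L_r}$. *)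

From mathcomp Require Import all_boot all_order all_algebra.
Set Implicit Arguments. Unset Strict Implicit. Unset Printing Implicit Defensive.
Import Order.TTheory GRing.Theory Num.Theory.
Local Open Scope ring_scope.

(* Vertices: the vertex at depth r (0 <= r <= d) with index j (0 <= j < k^r),
   numbered breadth-first: the root is (0,0), and the children of (r,j) are
   (r+1, k*j + c) for c < k; hence the parent of (r+1, j) is (r, j %/ k).
   A configuration stores one bit for each pair (r, j) in 'I_d.+1 * 'I_(k^d);
   entries with j >= k^r do not correspond to vertices and are required to be
   false (see [valid]), so valid configurations are in bijection with
   {0,1}^(vertices). *)
Definition conf (k d : nat) := {ffun 'I_d.+1 * 'I_(k ^ d) -> bool}.

(* value of the configuration at (r, j) (false if out of range) *)
Definition lk (k d : nat) (s : conf k d) (r j : nat) : bool :=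
  match (insub r : option 'I_d.+1), (insub j : option 'I_(k ^ d)) with
  | Some r', Some j' => s (r', j')
  | _, _ => false
  end.

Definition valid (k d : nat) (s : conf k d) : bool :=
  [forall p : 'I_d.+1 * 'I_(k ^ d), (k ^ p.1 <= p.2)%N ==> ~~ s p].

(* Probability of the configuration s under the broadcast process:
   root uniform, each edge keeps the parent's bit w.p. (1+theta)/2. *)
Definition weight (R : fieldType) (theta : R) (k d : nat) (s : conf k d) : R :=
  if valid s then
    2^-1 * \prod_(r < d) \prod_(j < k ^ d | (j < k ^ r.+1)%N)
       (if lk s r.+1 j == lk s r (j %/ k) then (1 + theta) / 2 else (1 - theta) / 2)
  else 0.

Definition Pr (R : fieldType) (theta : R) (k d : nat) (A : pred (conf k d)) : R :=
  \sum_(s : conf k d | A s) weight theta s.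

Definition condPr (R : fieldType) (theta : R) (k d : nat)
    (A B : pred (conf k d)) : R :=
  Pr theta [pred s | A s && B s] / Pr theta B.

Definition leaves_eq (k d : nat) (x : {ffun 'I_(k ^ d) -> bool}) : pred (conf k d) :=
  [pred s | [forall j : 'I_(k ^ d), lk s d j == x j]].

(* X^(d)(L_{d-1}(i)) = x(L_{d-1}(i)) for the child i of the root (vertex (1,i)):
   its descendants at depth d are the leaves j with j %/ k^(d-1) = i. *)
Definition subtree_leaves_eq (k d : nat) (x : {ffun 'I_(k ^ d) -> bool}) (i : nat)
  : pred (conf k d) :=
  [pred s | [forall j : 'I_(k ^ d), (j %/ k ^ d.-1 == i)%N ==> (lk s d j == x j)]].

Definition vertex_one (k d : nat) (r j : nat) : pred (conf k d) :=
  [pred s | lk s r j].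
Arguments vertex_one k d r j : clear implicits.

From mathcomp Require Import all_boot all_order all_algebra ring lra.
Set Implicit Arguments. Unset Strict Implicit. Unset Printing Implicit Defensive.
Import Order.TTheory GRing.Theory Num.Theory.
Local Open Scope ring_scope.

(* Fix the bit of the root. The subtrees hanging from its children then evolve
   independently, so the weight of a configuration is a product over the
   children, and summing over configurations turns this product into a product
   of sums. With [K_i(c)] the likelihood of the leaves below child [i] given
   [X_i = c], and [e] the edge weights, this gives
     P[X_root = b, leaves = x] = 1/2 * prod_i (e(1,b) K_i(1) + e(0,b) K_i(0)),
   and, since flipping every bit of a subtree preserves its weight,
     P[X_i = 1 | leaves below i] = K_i(1) / (K_i(1) + K_i(0)).
   A child where the latter is at least 19/20 has [K_i(1) >= 19 K_i(0)]; for
   theta = 9/10 its factor for [b = 1] is then at least 181/19 times its factor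
   for [b = 0], while any child loses at most a factor 19 there. Four such
   children out of six make the posterior odds of the root at least
   (181/19)^4 / 19^2 >= 19. *)

Lemma big_option (R : Type) (idx : R) (op : Monoid.com_law idx) (I : finType)
    (F : option I -> R) :
  \big[op/idx]_(o : option I) F o = op (F None) (\big[op/idx]_(i : I) F (Some i)).
Proof.
rewrite (bigD1 None) //=; congr (op _ _).
rewrite (reindex_omap Some id) //=; last by case.
by apply: eq_bigl => i; rewrite eqxx.
Qed.

Definition supported_in (T I : finType) (block : T -> I) (i : I)
    (t : {ffun T -> bool}) : bool :=
  [forall p, (block p != i) ==> ~~ t p].

Section BlockFactorization.
Variables (R : comPzSemiRingType) (T I : finType) (block : T -> I).

Let restrict (s : {ffun T -> bool}) : {ffun I -> {ffun T -> bool}} :=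
  [ffun i => [ffun p => (block p == i) && s p]].
Let glue (f : {ffun I -> {ffun T -> bool}}) : {ffun T -> bool} :=
  [ffun p => f (block p) p].

Lemma sum_prod_blocks (G : I -> {ffun T -> bool} -> R) :
  (forall i (s s' : {ffun T -> bool}),
     (forall p, block p = i -> s p = s' p) -> G i s = G i s') ->
  \sum_s \prod_i G i s = \prod_i \sum_(t | supported_in block i t) G i t.
Proof.
move=> G_local.
have restrict_supp s i : supported_in block i (restrict s i).
  by apply/forallP => p; rewrite !ffunE; apply/implyP => /negbTE ->.
rewrite bigA_distr_big_dep /= (reindex_onto restrict glue)
  => [|f /familyP f_supp].
  apply: eq_big => [s|s _].
    have -> : glue (restrict s) = s by apply/ffunP => p; rewrite !ffunE eqxx.
    by rewrite eqxx andbT; symmetry; apply/familyP => i; apply: restrict_supp.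
  by apply: eq_bigr => i _; apply: G_local => p <-; rewrite !ffunE eqxx.
apply/ffunP => i; apply/ffunP => p; rewrite !ffunE.
have /forallP/(_ p) := f_supp i.
by case: eqP => [<-|_ /negbTE] //= ->.
Qed.

End BlockFactorization.

Definition edge_weight (R : fieldType) (th : R) (a b : bool) : R :=
  if a == b then (1 + th) / 2 else (1 - th) / 2.

Lemma edge_weight_suml (R : numFieldType) (th : R) b :
  edge_weight th true b + edge_weight th false b = 1.
Proof. by rewrite /edge_weight; case: b => /=; field. Qed.

Lemma edge_weight_sumr (R : numFieldType) (th : R) a :
  edge_weight th a true + edge_weight th a false = 1.
Proof. by rewrite /edge_weight; case: a => /=; field. Qed.

Lemma edge_weight_gt0 (R : realFieldType) (th : R) a b :
  -1 < th < 1 -> 0 < edge_weight th a b.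
Proof.
by move=> /andP [th_gtN1 th_lt1]; rewrite /edge_weight; case: (a == b); lra.
Qed.

(* The likelihood of the leaves of a subtree given the bit [b] of the parent
   of its top vertex, from their likelihoods [K1], [K0] given the bit of the
   top vertex. *)
Definition message (R : fieldType) (th K1 K0 : R) (b : bool) : R :=
  edge_weight th true b * K1 + edge_weight th false b * K0.

Lemma message_gt0 (R : realFieldType) (th K1 K0 : R) b :
  -1 < th < 1 -> 0 <= K1 -> 0 <= K0 -> 0 < K1 + K0 -> 0 < message th K1 K0 b.
Proof.
move=> th_range K1_ge0 K0_ge0 K_gt0; rewrite /message.
have e1_gt0 := edge_weight_gt0 true b th_range.
have e0_gt0 := edge_weight_gt0 false b th_range.
have [K1_gt0|K1_le0] := ltrP 0 K1.
  by apply: ltr_wpDr; [exact: mulr_ge0 (ltW e0_gt0) K0_ge0 | exact: mulr_gt0].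
have K1_0 : K1 = 0 by apply/le_anti; rewrite K1_le0 K1_ge0.
by move: K_gt0; rewrite K1_0 mulr0 !add0r => K0_gt0; apply: mulr_gt0.
Qed.

Lemma message_diag (R : numFieldType) (th K : R) b : message th K K b = K.
Proof. by rewrite /message -mulrDl edge_weight_suml mul1r. Qed.

Lemma divf_scale (F : fieldType) (c a b : F) :
  c != 0 -> c * a / (c * a + c * b) = a / (a + b).
Proof. by move=> c_neq0; rewrite -mulrDr invfM mulrACA divff ?mul1r. Qed.

Lemma condPr_vertex_one (R : fieldType) (th : R) k d r j (A : pred (conf k d)) :
  condPr th (vertex_one k d r j) A =
  Pr th [pred s | (lk s r j == true) && A s] /
    (Pr th [pred s | (lk s r j == true) && A s] +
     Pr th [pred s | (lk s r j == false) && A s]).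
Proof.
rewrite /condPr /Pr [in X in _ / X](bigID (fun s => lk s r j)) /=.
by congr (_ / (_ + _)); apply: eq_bigl => s; rewrite /vertex_one /=;
  case: (lk s r j); rewrite ?andbT ?andbF.
Qed.

Section BroadcastTree.
Variables (k n : nat).
Implicit Types (s t : conf k.+1 n.+1) (x : {ffun 'I_(k.+1 ^ n.+1) -> bool}).

(* The vertex [(r, j)], [r >= 1], lies in the subtree of the child
   [j %/ k.+1 ^ r.-1] of the root; [None] collects the root and the slots
   that are not vertices. *)
Definition child_block (p : 'I_n.+2 * 'I_(k.+1 ^ n.+1)) : option 'I_k.+1 :=
  if (0 < p.1)%N && (p.2 < k.+1 ^ p.1)%N then insub (p.2 %/ k.+1 ^ p.1.-1)%N
  else None.

Definition agree_on (o : option 'I_k.+1) s s' :=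
  forall p, child_block p = o -> s p = s' p.

Lemma lkE s r j (hr : (r < n.+2)%N) (hj : (j < k.+1 ^ n.+1)%N) :
  lk s r j = s (Ordinal hr, Ordinal hj).
Proof. by rewrite /lk insubT /= insubT. Qed.

Lemma child_block_vertex (i : 'I_k.+1) r j (hr : (r < n.+2)%N)
    (hj : (j < k.+1 ^ n.+1)%N) :
  (0 < r)%N -> (j < k.+1 ^ r)%N -> (j %/ k.+1 ^ r.-1)%N = i ->
  child_block (Ordinal hr, Ordinal hj) = Some i.
Proof. by move=> r_gt0 jr ji; rewrite /child_block /= r_gt0 jr ji valK. Qed.

Lemma child_block_None p :
  child_block p = None ->
  ((p.1 == 0 :> nat) && (p.2 == 0 :> nat)) || (k.+1 ^ p.1 <= p.2)%N.
Proof.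
rewrite /child_block; case: p => [r j] /=.
case: (posnP r) => [->|r_gt0] /=; first by rewrite expn0; case: (nat_of_ord j).
rewrite leqNgt; case: ltnP => //= jr.
case: insubP => // /negP []; rewrite ltn_divLR ?expn_gt0 //.
by rewrite -expnS prednK.
Qed.

Lemma child_block_Some p i : child_block p = Some i -> (0 < p.1)%N.
Proof. by rewrite /child_block; case: (0 < p.1)%N. Qed.

Lemma lk_agree_on (i : 'I_k.+1) s s' r j :
  agree_on (Some i) s s' ->
  (0 < r)%N -> (j < k.+1 ^ r)%N -> (j %/ k.+1 ^ r.-1)%N = i ->
  lk s r j = lk s' r j.
Proof.
move=> ss' r_gt0 jr ji; rewrite /lk.
case: insubP => [r' _ er|] //; case: insubP => [j' _ ej|] //.
by apply: ss'; rewrite /child_block /= er ej r_gt0 jr /= ji valK.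
Qed.

Lemma lk_child_agree_on (i : 'I_k.+1) s s' :
  agree_on (Some i) s s' -> lk s 1 i = lk s' 1 i.
Proof. by move=> ss'; rewrite (lk_agree_on ss') // divn1. Qed.

Lemma subtree_leaves_eq_agree_on x (i : 'I_k.+1) s s' :
  agree_on (Some i) s s' -> subtree_leaves_eq x i s = subtree_leaves_eq x i s'.
Proof.
move=> ss'; apply: eq_forallb => j; case: eqP => //= ji.
by rewrite (lk_agree_on ss').
Qed.

Lemma valid_agree_on s s' : agree_on None s s' -> valid s = valid s'.
Proof.
move=> ss'; apply: eq_forallb => p; case: leqP => //= p_vertex.
by rewrite ss' // /child_block [(p.2 < _)%N]ltnNge p_vertex andbF.
Qed.

Lemma lk_root_agree_on s s' : agree_on None s s' -> lk s 0 0 = lk s' 0 0.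
Proof.
move=> ss'; have h0 : (0 < k.+1 ^ n.+1)%N by rewrite expn_gt0.
by rewrite !(lkE _ _ h0) ss'.
Qed.

Lemma leaves_eq_subtrees x s :
  leaves_eq x s = [forall i : 'I_k.+1, subtree_leaves_eq x i s].
Proof.
apply/forallP/forallP => [leaves i|subtrees j].
  by apply/forallP => j; apply/implyP => _; apply: leaves.
have ji : (j %/ k.+1 ^ n < k.+1)%N by rewrite ltn_divLR ?expn_gt0 // -expnS.
by have /forallP/(_ j)/implyP := subtrees (Ordinal ji); apply.
Qed.

Definition root_conf (b : bool) : conf k.+1 n.+1 :=
  [ffun p : 'I_n.+2 * 'I_(k.+1 ^ n.+1) =>
     b && (p.1 == 0 :> nat) && (p.2 == 0 :> nat)].

Lemma root_block_confE b t :
  supported_in child_block None t && (valid t && (lk t 0 0 == b)) =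
  (t == root_conf b).
Proof.
have h0 : (0 < k.+1 ^ n.+1)%N by rewrite expn_gt0.
apply/idP/eqP => [/and3P [/forallP t_supp /forallP t_valid /eqP t_root]|->].
  apply/ffunP => p; rewrite ffunE.
  case p_block: (child_block p) => [i|].
    have := t_supp p; rewrite p_block /= => /negbTE ->.
    have := child_block_Some p_block; rewrite lt0n => /negbTE ->.
    by rewrite andbF.
  case/orP: (child_block_None p_block) => [/andP [/eqP p1 /eqP p2]|p_out].
    case: p p_block p1 p2 => [[r hr] [j hj]] /= _ p1 p2; subst r j.
    by rewrite -t_root (lkE _ hr hj) !andbT.
  have := t_valid p; rewrite p_out /= => /negbTE ->.
  by case: eqP p_out => [->|]; case: eqP => [->|] //=; rewrite andbF.
apply/and3P; split.
- apply/forallP => p; rewrite ffunE; apply/implyP.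
  by apply: contraNN => /andP [/andP [_ /eqP p1] _]; rewrite /child_block p1.
- apply/forallP => p; rewrite ffunE; apply/implyP.
  by case: eqP => [->|_]; case: eqP => [->|_]; rewrite ?andbF.
- by rewrite (lkE _ _ h0) ffunE /= !andbT.
Qed.

Definition flip_subtree (i : 'I_k.+1) t : conf k.+1 n.+1 :=
  [ffun p => if child_block p == Some i then ~~ t p else t p].

Lemma flip_subtreeK i : involutive (flip_subtree i).
Proof.
move=> t; apply/ffunP => p; rewrite !ffunE.
by case: (child_block p == Some i); rewrite ?negbK.
Qed.

Lemma lk_flip_subtree (i : 'I_k.+1) t r j :
  (0 < r)%N -> (r < n.+2)%N -> (j < k.+1 ^ r)%N -> (j %/ k.+1 ^ r.-1)%N = i ->
  lk (flip_subtree i t) r j = ~~ lk t r j.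
Proof.
move=> r_gt0 rn jr ji.
have hj : (j < k.+1 ^ n.+1)%N by apply: leq_trans jr _; rewrite leq_pexp2l.
by rewrite !(lkE _ rn hj) ffunE (child_block_vertex _ _ r_gt0 jr ji) eqxx.
Qed.

Lemma supported_flip_subtree i t :
  supported_in child_block (Some i) (flip_subtree i t) =
  supported_in child_block (Some i) t.
Proof. by apply: eq_forallb => p; rewrite ffunE; case: eqP. Qed.

Section Weights.
Variables (R : numFieldType) (th : R).

(* The edge joining the subtree [i] to the root is not included. *)
Definition subtree_weight (i : nat) s : R :=
  \prod_(r < n)
    \prod_(j < k.+1 ^ n.+1 | (j < k.+1 ^ r.+2)%N && (j %/ k.+1 ^ r.+1 == i)%N)
      edge_weight th (lk s r.+2 j) (lk s r.+1 (j %/ k.+1)).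

Lemma weight_factor s :
  valid s ->
  weight th s =
  2^-1 * \prod_(i < k.+1)
           (edge_weight th (lk s 1 i) (lk s 0 0) * subtree_weight i s).
Proof.
move=> s_valid; rewrite /weight s_valid; congr (_ * _).
rewrite big_ord_recl /= big_split /=; congr (_ * _).
  rewrite -(big_ord_widen _
             (fun j => edge_weight th (lk s 1 j) (lk s 0 (j %/ k.+1)))).
    by apply: eq_bigr => i _; rewrite divn_small.
  by rewrite -{1}[k.+1]expn1 leq_pexp2l.
rewrite /subtree_weight exchange_big /=; apply: eq_bigr => r _.
rewrite (partition_big (fun j : 'I_(k.+1 ^ n.+1) =>
                         inord (j %/ k.+1 ^ r.+1) : 'I_k.+1) predT) //=.
apply: eq_bigr => i _; apply: eq_bigl => j.
case: (ltnP j (k.+1 ^ r.+2)) => //= jr.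
have ji : (j %/ k.+1 ^ r.+1 < k.+1)%N by rewrite ltn_divLR ?expn_gt0 // -expnSr.
apply/eqP/eqP => [<-|ji_eq]; first by rewrite inordK.
by apply/val_inj; rewrite /= inordK // ji_eq.
Qed.

Lemma subtree_weight_agree_on (i : 'I_k.+1) s s' :
  agree_on (Some i) s s' -> subtree_weight i s = subtree_weight i s'.
Proof.
move=> ss'; apply: eq_bigr => r _; apply: eq_bigr => j /andP [jr /eqP ji].
congr edge_weight; apply: (lk_agree_on ss') => //.
- by rewrite ltn_divLR // -expnSr.
- by rewrite /= -divnMA -expnS.
Qed.

Lemma sum_root_block b :
  \sum_(t | supported_in child_block None t)
     (if valid t && (lk t 0 0 == b) then 2^-1 else 0 : R) = 2^-1.
Proof.
rewrite -big_mkcondr /= (eq_bigl (pred1 (root_conf b))) ?big_pred1_eq // => t.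
exact: root_block_confE.
Qed.

Lemma sum_weight_root_subtrees b (A : 'I_k.+1 -> pred (conf k.+1 n.+1)) :
  (forall i s s', agree_on (Some i) s s' -> A i s = A i s') ->
  \sum_(s | (lk s 0 0 == b) && [forall i, A i s]) weight th s =
  2^-1 * \prod_(i < k.+1)
           \sum_(t | supported_in child_block (Some i) t && A i t)
             edge_weight th (lk t 1 i) b * subtree_weight i t.
Proof.
move=> A_local.
pose G o s : R :=
  if o is Some i then
    if A i s then edge_weight th (lk s 1 i) b * subtree_weight i s else 0
  else if valid s && (lk s 0 0 == b) then 2^-1 else 0.
transitivity (\sum_s \prod_o G o s).
  rewrite big_mkcond; apply: eq_bigr => s _; rewrite big_option /=.
  case s_valid: (valid s); last by rewrite /weight s_valid if_same mul0r.
  rewrite (weight_factor s_valid); case: eqP => [<-|_] /=; last by rewrite mul0r.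
  case: (boolP [forall i, A i s]) => [/forallP As|/forallPn [i nAs]].
    by congr (_ * _); apply: eq_bigr => i _; rewrite As.
  by rewrite (bigD1 i) //= (negbTE nAs) mul0r mulr0.
rewrite (@sum_prod_blocks _ _ _ child_block G); last first.
  case=> [i|] s s' ss' /=.
    rewrite (A_local i s s' ss') (subtree_weight_agree_on ss').
    by rewrite (lk_child_agree_on ss').
  by rewrite (valid_agree_on ss') (lk_root_agree_on ss').
rewrite big_option /= sum_root_block; congr (_ * _).
by apply: eq_bigr => i _; rewrite big_mkcondr.
Qed.

(* [P(A | X_i = c)] for an event [A] of the subtree [i]. *)
Definition subtree_lik (i : 'I_k.+1) (c : bool) (A : pred (conf k.+1 n.+1))
    : R :=
  \sum_(t | supported_in child_block (Some i) t && A t && (lk t 1 i == c))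
    subtree_weight i t.

Lemma subtree_likD (i : 'I_k.+1) A :
  subtree_lik i true A + subtree_lik i false A =
  \sum_(t | supported_in child_block (Some i) t && A t) subtree_weight i t.
Proof.
rewrite [RHS](bigID (fun t => lk t 1 i)) /=.
by congr (_ + _); apply: eq_bigl => t; case: (lk t 1 i); rewrite ?andbT ?andbF.
Qed.

Lemma sum_edge_subtree_weight (i : 'I_k.+1) b A :
  \sum_(t | supported_in child_block (Some i) t && A t)
    edge_weight th (lk t 1 i) b * subtree_weight i t =
  message th (subtree_lik i true A) (subtree_lik i false A) b.
Proof.
rewrite (bigID (fun t => lk t 1 i)) /= /message /subtree_lik !big_distrr /=.
congr (_ + _).
  by apply: eq_big => [t|t /andP [_ ->]] //; rewrite eqb_id.
by apply: eq_big => [t|t /andP [_ /negbTE ->]] //; rewrite eqbF_neg.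
Qed.

Lemma sum_edge_subtree_weight_child (i : 'I_k.+1) b c A :
  \sum_(t | supported_in child_block (Some i) t && ((lk t 1 i == c) && A t))
    edge_weight th (lk t 1 i) b * subtree_weight i t =
  edge_weight th c b * subtree_lik i c A.
Proof.
rewrite /subtree_lik big_distrr /=.
apply: eq_big => [t|t /andP [_ /andP [/eqP -> _]]] //.
by rewrite -andbA [(lk t 1 i == c) && _]andbC.
Qed.

Lemma subtree_weight_flip (i : 'I_k.+1) t :
  subtree_weight i (flip_subtree i t) = subtree_weight i t.
Proof.
apply: eq_bigr => r _; apply: eq_bigr => j /andP [jr /eqP ji].
have jr' : (j %/ k.+1 < k.+1 ^ r.+1)%N by rewrite ltn_divLR // -expnSr.
have ji' : (j %/ k.+1 %/ k.+1 ^ r.+1.-1)%N = i by rewrite /= -divnMA -expnS.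
by rewrite /edge_weight !lk_flip_subtree ?(inj_eq negb_inj) // !ltnS // ltnW.
Qed.

Lemma subtree_lik_flip (i : 'I_k.+1) :
  subtree_lik i true xpredT = subtree_lik i false xpredT.
Proof.
rewrite /subtree_lik (reindex_inj (inv_inj (@flip_subtreeK i))) /=.
apply: eq_big => [t|t _]; last exact: subtree_weight_flip.
rewrite supported_flip_subtree lk_flip_subtree ?divn1 //.
by case: (lk t 1 i).
Qed.

Lemma Pr_root_leaves x b :
  Pr th [pred s | (lk s 0 0 == b) && leaves_eq x s] =
  2^-1 * \prod_(i < k.+1)
           message th (subtree_lik i true (subtree_leaves_eq x i))
                      (subtree_lik i false (subtree_leaves_eq x i)) b.
Proof.
rewrite /Pr (eq_bigl (fun s => (lk s 0 0 == b) &&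
                               [forall i : 'I_k.+1, subtree_leaves_eq x i s]));
  last by move=> s; rewrite /= leaves_eq_subtrees.
rewrite sum_weight_root_subtrees => [|i s s'];
  last exact: subtree_leaves_eq_agree_on.
by congr (_ * _); apply: eq_bigr => i _; rewrite sum_edge_subtree_weight.
Qed.

Lemma Pr_child_subtree x (i : 'I_k.+1) c :
  Pr th [pred s | (lk s 1 i == c) && subtree_leaves_eq x i s] =
  2^-1 * \prod_(j < k.+1 | j != i) subtree_lik j true xpredT *
  subtree_lik i c (subtree_leaves_eq x i).
Proof.
pose A j : pred (conf k.+1 n.+1) := fun s =>
  if j == i then (lk s 1 i == c) && subtree_leaves_eq x i s else true.
have A_local j s s' : agree_on (Some j) s s' -> A j s = A j s'.
  rewrite /A; case: eqP => [-> ss'|//] /=.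
  by rewrite (lk_child_agree_on ss') (subtree_leaves_eq_agree_on x ss').
have A_i s : [forall j, A j s] = (lk s 1 i == c) && subtree_leaves_eq x i s.
  apply/forallP/idP => [/(_ i)|Ai j]; first by rewrite /A eqxx.
  by rewrite /A; case: eqP.
have root_b b :
    \sum_(s | (lk s 0 0 == b) && [forall j, A j s]) weight th s =
    2^-1 * (\prod_(j < k.+1 | j != i) subtree_lik j true xpredT *
            (edge_weight th c b * subtree_lik i c (subtree_leaves_eq x i))).
  rewrite sum_weight_root_subtrees // (bigD1 i) //= [X in _ * X]mulrC.
  rewrite /A eqxx sum_edge_subtree_weight_child; congr (_ * (_ * _)).
  apply: eq_bigr => j /negbTE ji; rewrite ji sum_edge_subtree_weight.
  by rewrite -subtree_lik_flip message_diag.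
rewrite /Pr (bigID (fun s => lk s 0 0)) /=.
rewrite (eq_bigl (fun s => (lk s 0 0 == true) && [forall j, A j s])) => [|s];
  last by rewrite A_i eqb_id andbC.
rewrite [X in _ + X](eq_bigl (fun s => (lk s 0 0 == false) && [forall j, A j s]))
  => [|s]; last by rewrite A_i eqbF_neg andbC.
by rewrite !root_b -!mulrDr -mulrDl edge_weight_sumr mul1r mulrA.
Qed.

Lemma condPr_root_leaves x :
  condPr th (vertex_one k.+1 n.+1 0 0) (leaves_eq x) =
  \prod_(i < k.+1) message th (subtree_lik i true (subtree_leaves_eq x i))
                              (subtree_lik i false (subtree_leaves_eq x i)) true /
  (\prod_(i < k.+1) message th (subtree_lik i true (subtree_leaves_eq x i))
                               (subtree_lik i false (subtree_leaves_eq x i)) true +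
   \prod_(i < k.+1) message th (subtree_lik i true (subtree_leaves_eq x i))
                               (subtree_lik i false (subtree_leaves_eq x i)) false).
Proof.
by rewrite condPr_vertex_one !Pr_root_leaves divf_scale // invr_eq0 pnatr_eq0.
Qed.

End Weights.

Section Positivity.
Variables (R : realFieldType) (th : R).
Hypothesis th_range : -1 < th < 1.

Lemma subtree_weight_gt0 (i : nat) t : 0 < subtree_weight th i t.
Proof.
by apply: prodr_gt0 => r _; apply: prodr_gt0 => j _; apply: edge_weight_gt0.
Qed.

Lemma subtree_lik_ge0 i c A : 0 <= subtree_lik th i c A.
Proof. by apply: sumr_ge0 => t _; apply/ltW/subtree_weight_gt0. Qed.

Lemma subtree_likD_gt0 (i : 'I_k.+1) (A : pred (conf k.+1 n.+1)) t :
  supported_in child_block (Some i) t -> A t ->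
  0 < subtree_lik th i true A + subtree_lik th i false A.
Proof.
move=> t_supp At; rewrite subtree_likD (bigD1 t) ?t_supp ?At //=.
apply: ltr_wpDr; last exact: subtree_weight_gt0.
by apply: sumr_ge0 => t' _; apply/ltW/subtree_weight_gt0.
Qed.

Lemma subtree_lik_predT_gt0 i : 0 < subtree_lik th i true xpredT.
Proof.
have zero_supp : supported_in child_block (Some i) [ffun=> false].
  by apply/forallP => p; rewrite ffunE implybT.
have := @subtree_likD_gt0 i xpredT _ zero_supp isT.
by rewrite -subtree_lik_flip; lra.
Qed.

Lemma subtree_leaves_lik_gt0 x (i : 'I_k.+1) :
  0 < subtree_lik th i true (subtree_leaves_eq x i) +
      subtree_lik th i false (subtree_leaves_eq x i).
Proof.
pose t : conf k.+1 n.+1 := [ffun p : 'I_n.+2 * 'I_(k.+1 ^ n.+1) =>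
  (child_block p == Some i) && (p.1 == n.+1 :> nat) && x p.2].
apply: (@subtree_likD_gt0 _ _ t).
  by apply/forallP => p; rewrite ffunE; apply/implyP => /negbTE ->.
apply/forallP => j; apply/implyP => /eqP ji.
rewrite (lkE _ (ltnSn n.+1) (ltn_ord j)) ffunE /= eqxx andbT.
rewrite (@child_block_vertex i _ _ _ (ltn_ord j)) //= eqxx /=.
by have -> : Ordinal (ltn_ord j) = j by apply: val_inj.
Qed.

Lemma condPr_child_subtree x (i : 'I_k.+1) :
  condPr th (vertex_one k.+1 n.+1 1 i) (subtree_leaves_eq x i) =
  subtree_lik th i true (subtree_leaves_eq x i) /
  (subtree_lik th i true (subtree_leaves_eq x i) +
   subtree_lik th i false (subtree_leaves_eq x i)).
Proof.
rewrite condPr_vertex_one !Pr_child_subtree divf_scale //.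
rewrite mulf_neq0 ?invr_eq0 ?pnatr_eq0 // lt0r_neq0 //.
by apply: prodr_gt0 => j _; apply: subtree_lik_predT_gt0.
Qed.

End Positivity.
End BroadcastTree.

Lemma ler_19_20_div (R : realFieldType) (a b : R) :
  0 < a + b -> (19%:R / 20%:R <= a / (a + b)) = (19%:R * b <= a).
Proof. by move=> ab_gt0; rewrite ler_pdivlMr //; apply/idP/idP; lra. Qed.

Lemma prod_odds_bound (R : realFieldType) (S : {set 'I_6}) :
  (4 <= #|S|)%N ->
  19%:R <= \prod_(i < 6) (if i \in S then 181%:R / 19%:R else 1 / 19%:R : R).
Proof.
move=> S_ge4; rewrite (bigID (mem S)) /=.
rewrite (eq_bigr (fun=> 181%:R / 19%:R)) => [|i iS]; last by rewrite iS.
rewrite [X in _ * X](eq_bigr (fun=> 1 / 19%:R)) => [|i /negbTE niS];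
  last by rewrite niS.
have S_le6 : (#|S| <= 6)%N by rewrite -[X in (_ <= X)%N](card_ord 6) max_card.
have card_notin : #|(fun i => i \notin S)| = (6 - #|S|)%N.
  apply: (@addnI #|S|); rewrite subnKC // -[RHS](card_ord 6) -(cardC S).
  by congr (_ + _); apply: eq_card => i; rewrite !inE.
rewrite !prodr_const card_notin.
by move: S_ge4 S_le6; case: #|S| => [|[|[|[|[|[|[|m]]]]]]] //= _ _;
  rewrite !exprS ?expr0; lra.
Qed.

Lemma message_odds_product (R : realFieldType) (K1 K0 : 'I_6 -> R)
    (S : {set 'I_6}) :
  (4 <= #|S|)%N -> (forall i, 0 <= K1 i) -> (forall i, 0 <= K0 i) ->
  (forall i, i \in S -> 19%:R * K0 i <= K1 i) ->
  19%:R * \prod_(i < 6) message (9%:R / 10%:R) (K1 i) (K0 i) false <=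
  \prod_(i < 6) message (9%:R / 10%:R) (K1 i) (K0 i) true.
Proof.
move=> S_ge4 K1_ge0 K0_ge0 good.
pose odds i : R := if i \in S then 181%:R / 19%:R else 1 / 19%:R.
have message_odds i :
    0 <= odds i * message (9%:R / 10%:R) (K1 i) (K0 i) false <=
    message (9%:R / 10%:R) (K1 i) (K0 i) true.
  have := K1_ge0 i; have := K0_ge0 i; rewrite /odds /message /edge_weight /=.
  by case: ifP => [/good|_]; rewrite ?mul1r; move=> *; apply/andP; split; lra.
apply: le_trans (ler_prod _ (fun i _ => message_odds i)).
rewrite big_split /= ler_wpM2r ?(prod_odds_bound R) //.
apply: prodr_ge0 => i _; have := K1_ge0 i; have := K0_ge0 i.
by rewrite /message /edge_weight /=; lra.
Qed.

Theorem mainTheorem18 (R : realFieldType) (d : nat)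
    (x : {ffun 'I_(6 ^ d) -> bool}) :
  (1 <= d)%N ->
  (4 <= #|[set i : 'I_6 |
            (95%:R / 100%:R <=
              condPr (9%:R / 10%:R : R) (vertex_one 6 d 1 i)
                     (subtree_leaves_eq x i))%R]|)%N ->
  19%:R / 20%:R <= condPr (9%:R / 10%:R : R) (vertex_one 6 d 0 0) (leaves_eq x).
Proof.
case: d x => [|n] x // _ S_ge4.
have th_range : -1 < (9%:R / 10%:R : R) < 1 by apply/andP; split; lra.
pose K c (i : 'I_6) := subtree_lik (9%:R / 10%:R : R) i c (subtree_leaves_eq x i).
have K_ge0 c i : 0 <= K c i by apply: subtree_lik_ge0.
have root_message_gt0 b :
    0 < \prod_(i < 6) message (9%:R / 10%:R) (K true i) (K false i) b.
  apply: prodr_gt0 => i _; apply: message_gt0 => //.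
  exact: subtree_leaves_lik_gt0.
rewrite condPr_root_leaves ler_19_20_div ?addr_gt0 //.
apply: (message_odds_product S_ge4) => i; [exact: K_ge0 | exact: K_ge0 |].
rewrite inE condPr_child_subtree // -ler_19_20_div;
  last exact: subtree_leaves_lik_gt0.
by move=> ?; lra.
Qed.
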